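(* Let $D,d\ge 1$ and let $\theta\mapsto K_m(\theta)\in\mathbb{C}^{D\times D}$, $m=0,\dots,d-1$, be differentiable with $\sum_{m=0}^{d-1}K_m(\theta)^\dagger K_m(\theta)=\mathbb{1}_D$ for all $\theta$. Fix $\theta_0$, write $K_m=K_m(\theta_0)$, $\dot K_m=\partial_\theta K_m(\theta)|_{\theta_0}$, and let $\mathcal{E}(X)=\sum_m K_mXK_m^\dagger$. Suppose $\mathcal{E}$ has a fixed point, i.e. a density matrix $\rho_{ss}$ with $\mathcal{E}(\rho_{ss})=\rho_{ss}$. Define $$\alpha=\sum_m \mathrm{Tr}\big(\dot K_m\rho_{ss}\dot K_m^\dagger\big),\qquad \gamma=\sum_m\mathrm{Tr}\big(K_m\rho_{ss}\dot K_m^\dagger\big),$$ $$\beta_\tau=\mathrm{Tr}\Big[\sum_m \dot K_m\,\mathcal{E}^{\tau}\Big(\sum_n K_n\rho_{ss}\dot K_n^\dagger\Big)K_m^\dagger\Big]\quad(\tau\ge 0).$$ Then for every integer $T\ge 1$ the quantum Fisher information at $\theta_0$ of the $T$-site translation-invariant MPS state $|\Phi_T(\theta)\rangle$ (defined in the context) is $$F_T(\theta_0)=4\Big(T\alpha+2\sum_{\tau=0}^{T-2}(T-\tau-1)\,\mathrm{Re}\,\beta_\tau-T^2|\gamma|^2\Big).$$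
   Context: The isometry $V_\theta:\mathbb{C}^D\to\mathbb{C}^D\otimes\mathbb{C}^d$ is $V_\theta|\psi\rangle=\sum_m K_m(\theta)|\psi\rangle\otimes|m\rangle$; it generates a translation-invariant matrix product state (TI-MPS) with bond dimension $D$ and physical dimension $d$, whose transfer matrix is the channel $\mathcal{E}$. The $T$-site state with left boundary the identity (left fixed point of the transfer matrix) and right boundary $\rho_{ss}$ is realized as follows: let $|\xi\rangle\in\mathbb{C}^D_A\otimes\mathbb{C}^D_S$ be a fixed ($\theta$-independent) purification of $\rho_{ss}$ on an ancilla $A$, and set $|\Phi_T(\theta)\rangle=\sum_{m_1,\dots,m_T}(\mathbb{1}_A\otimes K_{m_T}(\theta)\cdots K_{m_1}(\theta))|\xi\rangle\otimes|m_1\cdots m_T\rangle$. For a pure-state family $|\psi_\theta\rangle$ the quantum Fisher information is $F=4(\langle\dot\psi|\dot\psi\rangle-|\langle\dot\psi|\psi\rangle|^2)$ with $|\dot\psi\rangle=\partial_\theta|\psi_\theta\rangle$. *)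

From HB Require Import structures.
From mathcomp Require Import all_boot all_order all_algebra.
From mathcomp Require Import complex.
From mathcomp Require Import all_classical all_reals all_analysis.
Set Implicit Arguments. Unset Strict Implicit. Unset Printing Implicit Defensive.
Import Order.TTheory GRing.Theory Num.Theory.
Local Open Scope ring_scope.

Section Defs.
Variable R : realType.
Local Notation C := R[i].

Definition adj m n (A : 'M[C]_(m, n)) : 'M[C]_(n, m) := (map_mx (@conjc R) A)^T.

Definition cderiv (f : R -> C) (t : R) : C :=
  ((derive1 (fun s => complex.Re (f s)) t)%:C + 'i * (derive1 (fun s => complex.Im (f s)) t)%:C)%C.

Definition cderivable (f : R -> C) (t : R) : Prop :=
  derivable (fun s => complex.Re (f s)) t 1 /\ derivable (fun s => complex.Im (f s)) t 1.

Definition mderiv m n (A : R -> 'M[C]_(m, n)) (t : R) : 'M[C]_(m, n) :=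
  \matrix_(i, j) cderiv (fun s => A s i j) t.

Definition channel D d (K : 'I_d -> 'M[C]_D) (X : 'M[C]_D) : 'M[C]_D :=
  \sum_(m < d) K m *m X *m adj (K m).

Definition density_matrix D (rho : 'M[C]_D) : Prop :=
  (forall v : 'cV[C]_D, 0 <= (adj v *m rho *m v) 0 0) /\ \tr rho = 1.

(* xi (row a = ancilla index, column s = system index) purifies rho:
   Tr_A |xi><xi| = rho, i.e. rho_{s s'} = sum_a xi_{a s} conj(xi_{a s'}) *)
Definition purifies D (xi : 'M[C]_D) (rho : 'M[C]_D) : Prop :=
  forall s s' : 'I_D, rho s s' = \sum_(a < D) xi a s * conjc (xi a s').

(* K_{m_T} ... K_{m_1} for ms = [:: m_1; ...; m_T] *)
Definition kprod D d (K : 'I_d -> 'M[C]_D) (ms : seq 'I_d) : 'M[C]_D :=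
  foldl (fun A m => K m *m A) 1%:M ms.

(* components of |Phi_T> = sum_{ms} (1_A (x) K_{m_T}...K_{m_1}) |xi> (x) |m_1...m_T> ,
   indexed by (a, s, (m_1,...,m_T)) *)
Definition mpsState D d T (K : 'I_d -> R -> 'M[C]_D) (xi : 'M[C]_D) (t : R)
  (idx : 'I_D * 'I_D * T.-tuple 'I_d) : C :=
  let: (a, s, ms) := idx in
  \sum_(s' < D) kprod (fun m => K m t) ms s s' * xi a s'.

Definition cinner (I : finType) (u v : I -> C) : C := \sum_(i : I) conjc (u i) * v i.

Definition qfi (I : finType) (psi : R -> I -> C) (t : R) : C :=
  let dpsi := fun i => cderiv (fun s => psi s i) t in
  4%:R * (cinner dpsi dpsi - `|cinner dpsi (psi t)| ^+ 2).

End Defs.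

From HB Require Import structures.
From mathcomp Require Import all_boot all_order all_algebra.
From mathcomp Require Import complex.
From mathcomp Require Import all_classical all_reals all_analysis.
From mathcomp Require Import ring zify.
Import Order.TTheory GRing.Theory Num.Theory.
Local Open Scope ring_scope.
Set Implicit Arguments. Unset Strict Implicit.

(* Differentiating K_{m_T}...K_{m_1} by the Leibniz rule, every inner product
   of |Phi_T> and its derivative becomes a sum over words m_1...m_T of traces
   tr (B rho A^dagger).  Summing out the last letter shortens the word by one and
   replaces rho by E(rho) or by a mixed map X |-> sum_m A_m X B_m^dagger.  Since E
   is trace preserving and fixes rho, <dPhi|Phi> collapses to T gamma, while
   S_n = <dPhi_n|dPhi_n> obeys S_(n+1) = S_n + alpha + 2 sum_(k<n) Re beta_k
   (rho being Hermitian makes the two cross terms complex conjugates); summing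
   this recursion gives the double sum of the statement. *)

Section ComplexDerivative.
Variable R : realType.
Local Notation C := R[i].

Definition has_cderiv (f : R -> C) (t : R) (z : C) :=
  is_derive t (1 : R) (fun s => complex.Re (f s)) (complex.Re z) /\
  is_derive t (1 : R) (fun s => complex.Im (f s)) (complex.Im z).

Lemma has_cderivE f t z : has_cderiv f t z -> cderiv f t = z.
Proof.
case=> dRe dIm; rewrite /cderiv !derive1E.
by rewrite !derive_val [RHS]complexE.
Qed.

Lemma cderivableP f t : cderivable f t -> has_cderiv f t (cderiv f t).
Proof.
case=> dRe dIm; split; [apply: is_derive_eq (derivableP dRe) _ |
  apply: is_derive_eq (derivableP dIm) _];
  by rewrite /cderiv /= !derive1E !(mul0r, mul1r, subr0, addr0, add0r).
Qed.

Lemma has_cderiv_eq f g t z z' :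
  has_cderiv f t z -> f =1 g -> z = z' -> has_cderiv g t z'.
Proof. by move=> df /funext <- <-. Qed.

Lemma has_cderiv_cst c t : has_cderiv (fun=> c) t 0.
Proof. by split; apply: is_derive_eq (is_derive_cst _ _ _) _. Qed.

Lemma has_cderivD f g t x y : has_cderiv f t x -> has_cderiv g t y ->
  has_cderiv (fun s => f s + g s) t (x + y).
Proof.
case=> dfRe dfIm [dgRe dgIm]; split.
- have -> : (fun s => complex.Re (f s + g s)) =
            (fun s => complex.Re (f s)) + (fun s => complex.Re (g s)).
    by apply/funext => s; rewrite !fctE /=; case: (f s) (g s) => ? ? [? ?].
  apply: is_derive_eq (is_deriveD dfRe dgRe) _.
  by case: x y {dfRe dfIm dgRe dgIm} => [? ?] [? ?].
- have -> : (fun s => complex.Im (f s + g s)) =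
            (fun s => complex.Im (f s)) + (fun s => complex.Im (g s)).
    by apply/funext => s; rewrite !fctE /=; case: (f s) (g s) => ? ? [? ?].
  apply: is_derive_eq (is_deriveD dfIm dgIm) _.
  by case: x y {dfRe dfIm dgRe dgIm} => [? ?] [? ?].
Qed.

Lemma has_cderivM f g t x y : has_cderiv f t x -> has_cderiv g t y ->
  has_cderiv (fun s => f s * g s) t (f t * y + x * g t).
Proof.
case=> dfRe dfIm [dgRe dgIm]; split.
- have -> : (fun s => complex.Re (f s * g s)) =
      (fun s => complex.Re (f s)) * (fun s => complex.Re (g s))
      - (fun s => complex.Im (f s)) * (fun s => complex.Im (g s)).
    by apply/funext => s; rewrite !fctE /=; case: (f s) (g s) => ? ? [? ?]; reflexivity.
  apply: is_derive_eq (is_deriveB (is_deriveM dfRe dgRe) (is_deriveM dfIm dgIm)) _.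
  case: x y (f t) (g t) {dfRe dfIm dgRe dgIm} => [? ?] [? ?] [? ?] [? ?].
  by rewrite /GRing.scale /=; ring.
- have -> : (fun s => complex.Im (f s * g s)) =
      (fun s => complex.Re (f s)) * (fun s => complex.Im (g s))
      + (fun s => complex.Im (f s)) * (fun s => complex.Re (g s)).
    by apply/funext => s; rewrite !fctE /=; case: (f s) (g s) => ? ? [? ?]; reflexivity.
  apply: is_derive_eq (is_deriveD (is_deriveM dfRe dgIm) (is_deriveM dfIm dgRe)) _.
  case: x y (f t) (g t) {dfRe dfIm dgRe dgIm} => [? ?] [? ?] [? ?] [? ?].
  by rewrite /GRing.scale /=; ring.
Qed.

Lemma has_cderiv_sum (I : Type) (r : seq I) (F : I -> R -> C) t (z : I -> C) :
  (forall i, has_cderiv (F i) t (z i)) ->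
  has_cderiv (fun s => \sum_(i <- r) F i s) t (\sum_(i <- r) z i).
Proof.
move=> dF; elim: r => [|i r IH].
  by apply: has_cderiv_eq (has_cderiv_cst 0 t) _ _ => [s|]; rewrite big_nil.
by apply: has_cderiv_eq (has_cderivD (dF i) IH) _ _ => [s|]; rewrite big_cons.
Qed.

End ComplexDerivative.

Section MatrixDerivative.
Variable R : realType.
Local Notation C := R[i].

Definition has_mderiv m n (A : R -> 'M[C]_(m, n)) t (Z : 'M[C]_(m, n)) :=
  forall i j, has_cderiv (fun s => A s i j) t (Z i j).

Lemma mderivableP m n (A : R -> 'M[C]_(m, n)) t :
  (forall i j, cderivable (fun s => A s i j) t) -> has_mderiv A t (mderiv A t).
Proof.
by move=> dA i j; apply: has_cderiv_eq (cderivableP (dA i j)) _ _; rewrite ?mxE.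
Qed.

Lemma has_mderiv_cst m n (M : 'M[C]_(m, n)) t : has_mderiv (fun=> M) t 0.
Proof. by move=> i j; apply: has_cderiv_eq (has_cderiv_cst _ t) _ _; rewrite ?mxE. Qed.

Lemma has_mderivM m n p (A : R -> 'M[C]_(m, n)) (B : R -> 'M[C]_(n, p)) t X Y :
  has_mderiv A t X -> has_mderiv B t Y ->
  has_mderiv (fun s => A s *m B s) t (X *m B t + A t *m Y).
Proof.
move=> dA dB i j.
apply: has_cderiv_eq (has_cderiv_sum _ (fun k => has_cderivM (dA i k) (dB k j))) _ _.
  by move=> s; rewrite mxE.
by rewrite !mxE -big_split; apply: eq_bigr => k _; rewrite addrC.
Qed.

End MatrixDerivative.

Section Adjoint.
Variable R : realType.
Local Notation C := R[i].

Lemma adjE m n (A : 'M[C]_(m, n)) i j : adj A i j = conjc (A j i).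
Proof. by rewrite !mxE. Qed.

Lemma adjK m n (A : 'M[C]_(m, n)) : adj (adj A) = A.
Proof. by apply/matrixP => i j; rewrite !adjE conjcK. Qed.

Lemma adjM m n p (A : 'M[C]_(m, n)) (B : 'M[C]_(n, p)) :
  adj (A *m B) = adj B *m adj A.
Proof.
apply/matrixP => i j; rewrite adjE !mxE rmorph_sum; apply: eq_bigr => k _.
by rewrite !adjE rmorphM mulrC.
Qed.

Lemma adjD m n (A B : 'M[C]_(m, n)) : adj (A + B) = adj A + adj B.
Proof. by apply/matrixP => i j; rewrite !mxE rmorphD. Qed.

Lemma adj_sum m n (I : finType) (F : I -> 'M[C]_(m, n)) :
  adj (\sum_(i : I) F i) = \sum_(i : I) adj (F i).
Proof.
apply/matrixP => i j; rewrite adjE !summxE rmorph_sum.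
by apply: eq_bigr => k _; rewrite adjE.
Qed.

Lemma adj0 m n : adj (0 : 'M[C]_(m, n)) = 0.
Proof. by apply/matrixP => i j; rewrite !mxE rmorph0. Qed.

Lemma adj1mx n : adj (1%:M : 'M[C]_n) = 1%:M.
Proof. by apply/matrixP => i j; rewrite !mxE eq_sym rmorph_nat. Qed.

Lemma mxtrace_sum n (I : finType) (F : I -> 'M[C]_n) :
  \tr (\sum_(i : I) F i) = \sum_(i : I) \tr (F i).
Proof. exact: raddf_sum. Qed.

Lemma mxtrace_adj n (A : 'M[C]_n) : \tr (adj A) = conjc (\tr A).
Proof. by rewrite rmorph_sum; apply: eq_bigr => i _; rewrite adjE. Qed.

Lemma mxtrace_mul_adj m n (A B : 'M[C]_(m, n)) :
  \tr (B *m adj A) = \sum_i \sum_j conjc (A i j) * B i j.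
Proof.
by apply: eq_bigr => i _; rewrite mxE; apply: eq_bigr => j _; rewrite adjE mulrC.
Qed.

Lemma purifiesE n (xi rho : 'M[C]_n) : purifies xi rho -> rho = xi^T *m adj xi^T.
Proof.
by move=> xi_rho; apply/matrixP => s s'; rewrite xi_rho mxE; apply: eq_bigr => a _;
  rewrite adjE !mxE.
Qed.

End Adjoint.

Lemma big_tuple_cons (I : finType) (V : nmodType) n (F : seq I -> V) :
  \sum_(t : n.+1.-tuple I) F t = \sum_(i : I) \sum_(t : n.-tuple I) F (i :: t).
Proof.
rewrite pair_big /= (reindex (fun p : I * n.-tuple I => [tuple of p.1 :: p.2])) //=.
exists (fun t : n.+1.-tuple I => (thead t, [tuple of behead t])) => [[i t] _ | t _].
  by congr pair; apply: val_inj.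
by apply: val_inj; rewrite /= [in RHS](tuple_eta t).
Qed.

Lemma big_tuple0 (I : finType) (V : nmodType) (F : seq I -> V) :
  \sum_(t : 0.-tuple I) F t = F [::].
Proof. by rewrite (big_pred1 [tuple]) // => t /=; apply/esym/eqP; exact: tuple0. Qed.

Lemma sum_triangle (V : nmodType) n (f : nat -> V) :
  \sum_(0 <= j < n) \sum_(0 <= k < j) f k = \sum_(0 <= k < n.-1) f k *+ (n - k - 1).
Proof.
case: n => [|n]; first by rewrite !big_geq.
rewrite !big_mkord /=; under eq_bigr do rewrite big_mkord.
elim: n => [|n IH]; first by rewrite big_ord1 !big_ord0.
rewrite big_ord_recr IH /= [\sum_(k < n.+1) f k]big_ord_recr [in RHS]big_ord_recr /=.
rewrite addrA -big_split.
congr (_ + _); last by rewrite (_ : n.+2 - n - 1 = 1)%N ?mulr1n //; lia.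
by apply: eq_bigr => i _ /=; rewrite -mulrSr; congr (_ *+ _); have := ltn_ord i; lia.
Qed.

Section MatrixProductState.
Variable R : realType.
Local Notation C := R[i].
Variables D d : nat.
Implicit Types (A B : 'I_d -> 'M[C]_D) (ms : seq 'I_d).

Lemma kprod_cons A m ms : kprod A (m :: ms) = kprod A ms *m A m.
Proof.
rewrite /kprod /= mulmx1; move: (A m); elim: ms => [|m' ms IH] X /=.
  by rewrite mul1mx.
by rewrite IH [in RHS]IH mulmx1 mulmxA.
Qed.

(* The product rule for [kprod]: [B m] plays the role of the derivative of [A m]. *)
Fixpoint dkprod A B ms : 'M[C]_D :=
  if ms is m :: ms' then dkprod A B ms' *m A m + kprod A ms' *m B m else 0.

Lemma has_mderiv_kprod (K : 'I_d -> R -> 'M[C]_D) (Kd : 'I_d -> 'M[C]_D) t ms :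
  (forall m, has_mderiv (K m) t (Kd m)) ->
  has_mderiv (fun s => kprod (fun m => K m s) ms) t (dkprod (fun m => K m t) Kd ms).
Proof.
move=> dK; elim: ms => [|m ms IH] /=; first exact: has_mderiv_cst.
move=> i j; apply: has_cderiv_eq (has_mderivM IH (dK m) i j) _ _ => // s.
by rewrite kprod_cons.
Qed.

Definition mps_vec T (A : seq 'I_d -> 'M[C]_D) (xi : 'M[C]_D)
    (idx : 'I_D * 'I_D * T.-tuple 'I_d) : C :=
  let: (a, s, ms) := idx in (A ms *m xi^T) s a.

Lemma mpsStateE T (K : 'I_d -> R -> 'M[C]_D) xi t :
  mpsState (T := T) K xi t = mps_vec (kprod (fun m => K m t)) xi.
Proof.
by apply/funext => -[[a s] ms]; rewrite /= mxE; apply: eq_bigr => s' _; rewrite mxE.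
Qed.

Lemma cderiv_mpsState T (K : 'I_d -> R -> 'M[C]_D) (Kd : 'I_d -> 'M[C]_D) xi t :
  (forall m, has_mderiv (K m) t (Kd m)) ->
  (fun idx => cderiv (fun s => mpsState (T := T) K xi s idx) t) =
  mps_vec (dkprod (fun m => K m t) Kd) xi.
Proof.
move=> dK; apply/funext => -[[a s] ms]; apply: has_cderivE.
have := has_mderivM (has_mderiv_kprod ms dK) (has_mderiv_cst xi^T t) s a.
by rewrite mulmx0 addr0 => /has_cderiv_eq; apply => // s'; rewrite mpsStateE.
Qed.

Lemma cinner_mps_vec T (A B : seq 'I_d -> 'M[C]_D) (xi rho : 'M[C]_D) :
  purifies xi rho ->
  cinner (mps_vec (T := T) A xi) (mps_vec B xi) =
  \sum_(t : T.-tuple 'I_d) \tr (B t *m rho *m adj (A t)).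
Proof.
move=> /purifiesE ->; rewrite /cinner.
transitivity (\sum_(a < D) \sum_(s < D) \sum_(t : T.-tuple 'I_d)
                conjc ((A t *m xi^T) s a) * (B t *m xi^T) s a).
  by rewrite pair_big pair_big; apply: eq_bigr => -[[a s] t].
rewrite exchange_big; under eq_bigr do rewrite exchange_big; rewrite exchange_big.
apply: eq_bigr => t _.
by rewrite !mulmxA -mulmxA -adjM mxtrace_mul_adj.
Qed.

End MatrixProductState.

Section Channel.
Variable R : realType.
Local Notation C := R[i].
Variables D d : nat.
Implicit Types (A B K : 'I_d -> 'M[C]_D) (X Y : 'M[C]_D).

Definition bichannel A B X : 'M[C]_D := \sum_(m < d) A m *m X *m adj (B m).

Lemma bichannel_adj A B X : adj (bichannel A B X) = bichannel B A (adj X).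
Proof. by rewrite adj_sum; apply: eq_bigr => m _; rewrite !adjM adjK mulmxA. Qed.

Lemma iter_channel_adj K k X :
  iter k (channel K) (adj X) = adj (iter k (channel K) X).
Proof. by elim: k => //= k ->; rewrite [RHS]bichannel_adj. Qed.

Lemma bichannel_sandwich A B (U V : 'M[C]_D) X :
  \sum_(m < d) U *m A m *m X *m adj (V *m B m) = U *m bichannel A B X *m adj V.
Proof.
rewrite mulmx_sumr mulmx_suml; apply: eq_bigr => m _.
by rewrite adjM !mulmxA.
Qed.

Lemma bichannel_sandwichDr A B B' (U V V' : 'M[C]_D) X :
  \sum_(m < d) U *m A m *m X *m adj (V *m B m + V' *m B' m) =
  U *m bichannel A B X *m adj V + U *m bichannel A B' X *m adj V'.
Proof.
rewrite -!bichannel_sandwich -big_split.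
by apply: eq_bigr => m _; rewrite adjD mulmxDr.
Qed.

Lemma bichannel_sandwichD A B (U V : 'M[C]_D) X :
  \sum_(m < d) (U *m A m + V *m B m) *m X *m adj (U *m A m + V *m B m) =
  U *m bichannel A A X *m adj U + U *m bichannel A B X *m adj V
  + V *m bichannel B A X *m adj U + V *m bichannel B B X *m adj V.
Proof.
rewrite -addrA -!bichannel_sandwichDr -big_split.
by apply: eq_bigr => m _; rewrite mulmxDl mulmxDl.
Qed.

Lemma mxtrace_adj_sandwich (M N : 'M[C]_D) X :
  \tr (M *m X *m adj N) = conjc (\tr (N *m adj X *m adj M)).
Proof. by rewrite -mxtrace_adj !adjM !adjK mulmxA. Qed.

Variables Km Kd : 'I_d -> 'M[C]_D.
Hypothesis trace_preserving : \sum_(m < d) adj (Km m) *m Km m = 1%:M.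
Local Notation E := (channel Km).
Local Notation P := (kprod Km).
Local Notation dP := (dkprod Km Kd).

Lemma mxtrace_channel X : \tr (E X) = \tr X.
Proof.
rewrite mxtrace_sum; under eq_bigr do rewrite mxtrace_mulC mulmxA.
by rewrite -mxtrace_sum -mulmx_suml trace_preserving mul1mx.
Qed.

Lemma sum_mxtrace_kprod n X :
  \sum_(t : n.-tuple 'I_d) \tr (P t *m X *m adj (P t)) = \tr X.
Proof.
elim: n X => [|n IH] X.
  by rewrite (big_tuple0 (fun s => \tr (P s *m X *m adj (P s)))) adj1mx mul1mx mulmx1.
rewrite (big_tuple_cons _ (fun s => \tr (P s *m X *m adj (P s)))) exchange_big /=.
rewrite -(mxtrace_channel X) -(IH (E X)); apply: eq_bigr => t _.
under eq_bigr do rewrite kprod_cons.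
by rewrite -mxtrace_sum bichannel_sandwich.
Qed.

Lemma sum_mxtrace_kprod_dkprod n Y :
  \sum_(t : n.-tuple 'I_d) \tr (P t *m Y *m adj (dP t)) =
  \sum_(k < n) \tr (bichannel Km Kd (iter k E Y)).
Proof.
elim: n Y => [|n IH] Y.
  rewrite (big_tuple0 (fun s => \tr (P s *m Y *m adj (dP s)))) big_ord0.
  by rewrite adj0 mulmx0 mxtrace0.
rewrite (big_tuple_cons _ (fun s => \tr (P s *m Y *m adj (dP s)))) exchange_big /=.
rewrite big_ord_recl /=.
under [X in _ = _ + X]eq_bigr => k _ do rewrite -iterS iterSr.
rewrite -(IH (E Y)) -(sum_mxtrace_kprod n) -big_split; apply: eq_bigr => t _ /=.
under eq_bigr do rewrite kprod_cons.
by rewrite -mxtrace_sum bichannel_sandwichDr mxtraceD addrC.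
Qed.

Lemma sum_mxtrace_dkprod_succ n Y :
  \sum_(t : n.+1.-tuple 'I_d) \tr (dP t *m Y *m adj (dP t)) =
  \sum_(t : n.-tuple 'I_d) \tr (dP t *m E Y *m adj (dP t))
  + \sum_(t : n.-tuple 'I_d) \tr (dP t *m bichannel Km Kd Y *m adj (P t))
  + \sum_(t : n.-tuple 'I_d) \tr (P t *m bichannel Kd Km Y *m adj (dP t))
  + \tr (bichannel Kd Kd Y).
Proof.
rewrite -(sum_mxtrace_kprod n (bichannel Kd Kd Y)) -!big_split.
rewrite (big_tuple_cons _ (fun s => \tr (dP s *m Y *m adj (dP s)))) exchange_big /=.
apply: eq_bigr => t _ /=.
by rewrite -mxtrace_sum -!mxtraceD bichannel_sandwichD.
Qed.

Variable rho : 'M[C]_D.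
Hypotheses (rho_herm : adj rho = rho) (rho_fixed : E rho = rho).
Local Notation beta k := (\tr (bichannel Kd Km (iter k E (bichannel Km Kd rho)))).

Lemma sum_mxtrace_dkprod_fixed n :
  \sum_(t : n.-tuple 'I_d) \tr (dP t *m rho *m adj (dP t)) =
  n%:R * \tr (bichannel Kd Kd rho)
  + \sum_(0 <= j < n) \sum_(0 <= k < j) 2%:R * 'Re (beta k).
Proof.
elim: n => [|n IH].
  rewrite (big_tuple0 (fun s => \tr (dP s *m rho *m adj (dP s)))) big_geq //.
  by rewrite !mul0mx mxtrace0 mul0r addr0.
have bichannel_rho_adj : adj (bichannel Km Kd rho) = bichannel Kd Km rho.
  by rewrite bichannel_adj rho_herm.
have cross : \sum_(t : n.-tuple 'I_d) \tr (P t *m bichannel Kd Km rho *m adj (dP t)) =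
             \sum_(k < n) conjc (beta k).
  rewrite sum_mxtrace_kprod_dkprod; apply: eq_bigr => k _.
  by rewrite -bichannel_rho_adj iter_channel_adj -bichannel_adj mxtrace_adj.
have cross' : \sum_(t : n.-tuple 'I_d) \tr (dP t *m bichannel Km Kd rho *m adj (P t)) =
              \sum_(k < n) beta k.
  under eq_bigr do rewrite mxtrace_adj_sandwich.
  rewrite -rmorph_sum bichannel_rho_adj cross rmorph_sum.
  by apply: eq_bigr => k _; apply: conjcK.
rewrite sum_mxtrace_dkprod_succ rho_fixed IH cross cross' [in RHS]big_nat_recr //=.
have twice_Re :
    \sum_(0 <= k < n) 2%:R * 'Re (beta k) = \sum_(k < n) (beta k + conjc (beta k)).
  by rewrite big_mkord; apply: eq_bigr => k _; rewrite ReE mulrC divfK ?pnatr_eq0.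
rewrite twice_Re big_split /= -natr1; ring.
Qed.

End Channel.

Unset Implicit Arguments.

Theorem mainTheorem1 (R : realType) (D d : nat) (K : 'I_d -> R -> 'M[R[i]]_D)
  (theta0 : R) (rho xi : 'M[R[i]]_D) (T : nat) :
  (0 < D)%N -> (0 < d)%N ->
  (forall m i j t, cderivable (fun s => K m s i j) t) ->
  (forall t, \sum_(m < d) adj (K m t) *m K m t = 1%:M) ->
  density_matrix rho ->
  channel (fun m => K m theta0) rho = rho ->
  purifies xi rho ->
  (0 < T)%N ->
  let Km := fun m => K m theta0 in
  let Kd := fun m => mderiv (K m) theta0 in
  let E := channel Km in
  let alpha := \sum_(m < d) \tr (Kd m *m rho *m adj (Kd m)) in
  let gamma := \sum_(m < d) \tr (Km m *m rho *m adj (Kd m)) in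
  let beta := fun tau : nat =>
    \tr (\sum_(m < d) Kd m *m iter tau E (\sum_(n < d) Km n *m rho *m adj (Kd n))
                        *m adj (Km m)) in
  qfi (mpsState (T := T) K xi) theta0 =
  4%:R * (T%:R * alpha
          + 2%:R * \sum_(0 <= tau < T.-1) (T - tau - 1)%:R * 'Re (beta tau)
          - (T ^ 2)%:R * `|gamma| ^+ 2).
Proof.
(* Hermiticity of rho comes from the purification. *)
move=> _ _ dK trace_preserving _ rho_fixed xi_rho _ Km Kd E alpha gamma beta.
have TP := trace_preserving theta0.
have dKm m : has_mderiv (K m) theta0 (Kd m) := mderivableP (fun i j => dK m i j theta0).
have rho_herm : adj rho = rho by rewrite (purifiesE xi_rho) adjM adjK.
rewrite /qfi (cderiv_mpsState _ _ dKm) mpsStateE !(cinner_mps_vec _ _ _ xi_rho).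
rewrite (sum_mxtrace_dkprod_fixed _ TP rho_herm rho_fixed) sum_triangle.
rewrite (sum_mxtrace_kprod_dkprod _ TP).
have -> : \sum_(k < T) \tr (bichannel Km Kd (iter k E rho)) = T%:R * gamma.
  rewrite (eq_bigr (fun=> gamma)) => [|k _]; last by rewrite iter_fix // mxtrace_sum.
  by rewrite sumr_const card_ord mulr_natl.
rewrite normrM normr_nat exprMn natrX.
congr (_ * (_ * _ + _ - _)); first exact: mxtrace_sum.
rewrite mulr_sumr; apply: eq_bigr => tau _.
by rewrite -mulrnAr; congr (_ * _); rewrite mulr_natl.
Qed.
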